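(* Let $H$ be a simple hypergraph with $s=e(H)$ edges and fractional cover number $\rho^*=\rho^*(H)$. If $\rho^*<s$, then there is a constant $c=c(H)$ such that $\mathcal{E}_H(k)\leq c\,k^{(s-1)/(s-\rho^* )}$ for all positive integers $k$.
   Context: A fractional cover of a hypergraph $H$ is a function $\phi:E(H)\to[0,1]$ with $\sum_{e\ni v}\phi(e)\geq 1$ for every $v\in V(H)$; $\rho^*(H)$ is the minimum of $\sum_{e\in E(H)}\phi(e)$ over fractional covers. For hypergraphs $G,H$, $\operatorname{ex}(G,H)$ is the maximum number of edges of a subhypergraph of $G$ containing no copy of $H$, and $\mathcal{E}_H(k):=\sup\{e(G): G\text{ a simple hypergraph with }\operatorname{ex}(G,H)<k\}$. Hypergraphs have no isolated vertices. *)

From HB Require Import structures.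
From mathcomp Require Import boolp classical_sets reals exp.
From mathcomp Require Import all_boot all_order all_algebra.
Set Implicit Arguments. Unset Strict Implicit. Unset Printing Implicit Defensive.
Import Order.TTheory GRing.Theory Num.Theory.
Local Open Scope ring_scope.

(* A (finite) hypergraph on the vertex type 'I_n is a set of edges, each edge
   a set of vertices.  Being a set of sets, it has no repeated edges
   (simplicity); we require edges to be nonempty.  Its vertex set is taken to
   be the union of its edges ("no isolated vertices"), i.e. [cover G]. *)
Definition hypergraph (n : nat) (G : {set {set 'I_n}}) : bool :=
  set0 \notin G.

Definition has_copy (m n : nat) (H : {set {set 'I_m}}) (F : {set {set 'I_n}})
  : bool :=
  [exists f : {ffun 'I_m -> 'I_n},
     [forall x in cover H, forall y in cover H, (f x == f y) ==> (x == y)]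
     && [forall e in H, (f @: e) \in F]].

Definition ex (n m : nat) (G : {set {set 'I_n}}) (H : {set {set 'I_m}}) : nat :=
  \max_(F : {set {set 'I_n}} | (F \subset G) && ~~ has_copy H F) #|F|.

Definition frac_cover (R : realType) (m : nat) (H : {set {set 'I_m}})
  (phi : {set 'I_m} -> R) : Prop :=
  (forall e, e \in H -> 0 <= phi e <= 1) /\
  (forall v, v \in cover H -> 1 <= \sum_(e in H | v \in e) phi e).

Definition rho_star (R : realType) (m : nat) (H : {set {set 'I_m}}) : R :=
  inf [set w : R | exists phi : {set 'I_m} -> R,
                     frac_cover H phi /\ w = \sum_(e in H) phi e]%classic.

From HB Require Import structures.
From mathcomp Require Import boolp classical_sets reals exp sequences.
From mathcomp Require Import all_boot all_order all_algebra.
From mathcomp Require Import ring lra zify.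
Import Order.TTheory GRing.Theory Num.Theory.
Set Implicit Arguments. Unset Strict Implicit. Unset Printing Implicit Defensive.

(* Write s = e(H) and r = rho^*(H).  Counting: for a fractional cover phi of
   H with positive weights, Finner's inequality bounds the number of maps
   sending every edge of H onto an edge of G by (e(G) (m+1)^m)^(sum phi);
   taking the infimum over covers, G contains at most M e(G)^r copies of H,
   where M = ((m+1)^m)^r.
   Deletion: on average over the t-subsets of E(G), at most a fraction
   (t/e(G))^s of these copies survives, and deleting one edge from each
   leaves an H-free graph with at least t - M e(G)^r (t/e(G))^s edges.  For
   t about (e(G)^(s-r) / 2M)^(1/(s-1)) this is at least t/2, so
   ex(G,H) >= t/2, that is e(G) = O(ex(G,H)^((s-1)/(s-r))). *)

(* At most a fraction (t/l)^s of the t-subsets of an l-set contain a given s-set. *)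
Lemma bin_ratio_le_expn s l t : (s <= t <= l)%N ->
  ('C(l - s, t - s) * l ^ s <= 'C(l, t) * t ^ s)%N.
Proof.
elim: s l t => [|s IH] l t; first by rewrite !subn0 !expn0.
case: l t => [|l] [|t] //; first by rewrite andbF.
rewrite !subSS => lelt.
have absorb : ('C(l.+1, t.+1) * t.+1 = l.+1 * 'C(l, t))%N.
  by rewrite mulnC -mul_bin_diag.
suff shifted : ('C(l - s, t - s) * l.+1 ^ s <= 'C(l, t) * t.+1 ^ s)%N.
  by rewrite !expnS mulnCA [X in (_ <= X)%N]mulnA absorb -mulnA leq_mul2l shifted orbT.
have IHlt := IH l t lelt.
case: s {IH} IHlt lelt => [|s] IHlt lelt; first by rewrite !expn0 !subn0.
have pos : (0 < t ^ s.+1 * l ^ s.+1)%N by rewrite muln_gt0 !expn_gt0; lia.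
have cross : (l.+1 ^ s.+1 * t ^ s.+1 <= t.+1 ^ s.+1 * l ^ s.+1)%N.
  by rewrite -!expnMn leq_exp2r //; nia.
rewrite -(leq_pmul2r pos); nia.
Qed.

Lemma exists_transversal (T : finType) (C : {set {set T}}) : set0 \notin C ->
  exists Y : {set T}, (#|Y| <= #|C|)%N /\ forall S, S \in C -> ~~ [disjoint S & Y].
Proof.
move=> C0; pose pick_in (S : {set T}) := [pick y in S].
exists (Some @^-1: (pick_in @: C)); split.
  rewrite -(card_imset _ Some_inj); apply: leq_trans (leq_imset_card pick_in C).
  by apply/subset_leq_card/subsetP => o /imsetP[y]; rewrite inE => py ->.
move=> S SC; have := imset_f pick_in SC; rewrite /pick_in.
case: pickP => [y Sy pyC | S0 _].
  by apply/negP => /disjointFr/(_ Sy); rewrite inE pyC.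
have S_0 : S = set0 by apply/setP => y; rewrite in_set0; apply: S0.
by move: C0; rewrite -S_0 SC.
Qed.

Section Deletion.
Variable T : finType.
Implicit Types (F G S U : {set T}) (C : {set {set T}}).

Definition draws G (t : nat) : {set {set T}} := [set U : {set T} | U \subset G & #|U| == t].

Lemma card_supersets G S t : S \subset G -> (t <= #|G|)%N ->
  (#|[set U in draws G t | S \subset U]| * #|G| ^ #|S| <= 'C(#|G|, t) * t ^ #|S|)%N.
Proof.
move=> SG tG; have [tS|St] := ltnP t #|S|.
  suff -> : [set U in draws G t | S \subset U] = set0 by rewrite cards0.
  apply/setP => U; rewrite /draws !inE.
  apply/negP => /andP[/andP[_ /eqP Ut]] /subset_leq_card.
  by rewrite Ut leqNgt tS.
apply: leq_trans (bin_ratio_le_expn (introT andP (conj St tG))).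
have cardGS : #|G :\: S| = (#|G| - #|S|)%N by rewrite cardsD (setIidPr SG).
rewrite leq_mul2r -cardGS -cards_draws; apply/orP; right.
pose minusS U := U :\: S.
have inj : {in [set U in draws G t | S \subset U] &, injective minusS}.
  move=> U V; rewrite !inE => /andP[_ SU] /andP[_ SV] eqUV.
  by rewrite -(setID U S) -(setID V S) (setIidPr SU) (setIidPr SV) -/(minusS U) eqUV.
rewrite -(card_in_imset inj); apply/subset_leq_card/subsetP => V /imsetP[U].
rewrite /draws !inE => /andP[/andP[UG /eqP <-] SU] ->.
by rewrite setSD //= cardsD (setIidPr SU).
Qed.

Variables (G : {set T}) (C : {set {set T}}) (s : nat).
Hypothesis C_sG : forall S, S \in C -> S \subset G /\ #|S| = s.

Lemma exists_draw_few_members t : (t <= #|G|)%N ->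
  exists2 U, U \in draws G t &
    (#|[set S in C | S \subset U]| * #|G| ^ s <= #|C| * t ^ s)%N.
Proof.
move=> tG; apply/exists_inP/contraT; rewrite negb_exists_in => /forall_inP many.
have double_count : (\sum_(U in draws G t) #|[set S in C | S \subset U]| =
                     \sum_(S in C) #|[set U in draws G t | S \subset U]|)%N.
  under eq_bigr do rewrite -sum1_card.
  under [RHS]eq_bigr do rewrite -sum1_card.
  rewrite (exchange_big_dep (mem C)) /=; last by move=> U S _; rewrite inE => /andP[].
  by apply: eq_bigr => S SC; apply: eq_bigl => U; rewrite !inE SC.
have : (\sum_(U in draws G t) (#|C| * t ^ s).+1 <= #|C| * ('C(#|G|, t) * t ^ s))%N.
  apply: (@leq_trans (\sum_(U in draws G t) #|[set S in C | S \subset U]| * #|G| ^ s)).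
    by apply: leq_sum => U /many; rewrite ltnNge.
  rewrite -big_distrl /= double_count big_distrl /= -sum_nat_const.
  apply: leq_sum => S /C_sG[SG <-]; exact: card_supersets.
by rewrite sum_nat_const cards_draws mulnCA leq_pmul2l ?ltnn // bin_gt0.
Qed.

Lemma exists_free_subset t : (0 < s)%N -> (t <= #|G|)%N ->
  exists F, [/\ F \subset G, forall S, S \in C -> ~~ (S \subset F)
              & ((t - #|F|) * #|G| ^ s <= #|C| * t ^ s)%N].
Proof.
move=> s_gt0 tG; have [U] := exists_draw_few_members tG.
rewrite inE => /andP[UG /eqP Ut] few.
have [|Y [cardY hitY]] := @exists_transversal _ [set S in C | S \subset U].
  by apply: contraL s_gt0; rewrite inE => /andP[/C_sG[_ <-] _]; rewrite cards0.
exists (U :\: Y); split.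
- exact: subset_trans (subsetDl U Y) UG.
- move=> S SC; apply/negP => /subsetDP[SU SY].
  by have := hitY S; rewrite inE SC SU SY => /(_ isT).
- apply: leq_trans few; rewrite leq_mul2r; apply/orP; right.
  apply: leq_trans cardY; rewrite cardsD -Ut.
  have := subset_leq_card (subsetIr U Y); lia.
Qed.
End Deletion.

Local Open Scope ring_scope.

Section Holder.
Variable R : realType.
Variables (I : finType) (P : pred I).

Lemma amgm_weighted (q x : I -> R) :
  (forall i, P i -> 0 < q i) -> (forall i, P i -> 0 <= x i) ->
  \sum_(i | P i) q i = 1 ->
  \prod_(i | P i) x i `^ q i <= \sum_(i | P i) q i * x i.
Proof.
move=> q_gt0 x_ge0 q_sum1.
have rhs_ge0 : 0 <= \sum_(i | P i) q i * x i.
  by apply: sumr_ge0 => i Pi; rewrite mulr_ge0 ?x_ge0 // ltW ?q_gt0.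
have [i /andP[Pi /eqP xi0]|] := pickP [pred i | P i && (x i == 0)].
  by rewrite (bigD1 i Pi) /= xi0 powR0 ?mul0r // gt_eqF // q_gt0.
move=> x_neq0; have x_gt0 i : P i -> 0 < x i.
  by move=> Pi; rewrite lt_def x_ge0 // andbT; have /= := x_neq0 i; rewrite Pi /= => ->.
set L := \sum_(i | P i) q i * ln (x i).
have -> : \prod_(i | P i) x i `^ q i = expR L.
  by rewrite expR_sum; apply: eq_bigr => i Pi; rewrite /powR gt_eqF ?x_gt0.
(* expR lies above its tangent line at L *)
have tangent i : P i -> expR L * (1 + (ln (x i) - L)) <= x i.
  move=> Pi; rewrite -[X in _ <= X](lnK (x_gt0 i Pi)) -[X in _ <= expR X](subrK L).
  by rewrite expRD mulrC ler_pM2r ?expR_gt0 ?expR_ge1Dx.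
have sum_tangent : \sum_(i | P i) q i * (expR L * (1 + (ln (x i) - L))) = expR L.
  under eq_bigr do rewrite mulrCA mulrDr mulr1 mulrBr.
  by rewrite -mulr_sumr big_split sumrB /= -mulr_suml q_sum1 -/L; ring.
rewrite -[leLHS]sum_tangent; apply: ler_sum => i Pi.
by apply: ler_wpM2l; [exact: ltW (q_gt0 i Pi) | exact: tangent].
Qed.

Variables (J : finType) (p : I -> R).
Hypotheses (p_gt0 : forall i, P i -> 0 < p i) (p_sum_ge1 : 1 <= \sum_(i | P i) p i).

Lemma holder_normalized (x : I -> J -> R) :
  (forall i j, P i -> 0 <= x i j) -> (forall i, P i -> \sum_j x i j = 1) ->
  \sum_j \prod_(i | P i) x i j `^ p i <= 1.
Proof.
move=> x_ge0 x_sum1.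
have x_le1 i j : P i -> x i j <= 1.
  move=> Pi; rewrite -(x_sum1 i Pi) (bigD1 j) //= lerDl.
  by apply: sumr_ge0 => k _; apply: x_ge0.
set ptot := \sum_(i | P i) p i; have ptot_gt0 : 0 < ptot by apply: lt_le_trans p_sum_ge1.
pose q i := p i / ptot.
have q_gt0 i : P i -> 0 < q i by move=> Pi; rewrite divr_gt0 ?p_gt0.
have q_sum1 : \sum_(i | P i) q i = 1 by rewrite -mulr_suml divff ?gt_eqF.
have q_le_p i : P i -> q i <= p i.
  by move=> Pi; rewrite ler_pdivrMr // ler_peMr ?p_sum_ge1 // ltW ?p_gt0.
(* the entries of x lie in [0, 1], so lowering the exponents to q raises the product *)
have lower_exponent j : \prod_(i | P i) x i j `^ p i <= \prod_(i | P i) x i j `^ q i.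
  apply: ler_prod => i Pi; rewrite powR_ge0 /=.
  have [->|xij_neq0] := eqVneq (x i j) 0; first by rewrite !powR0 ?gt_eqF ?q_gt0 ?p_gt0.
  by apply: ger_powR; rewrite ?q_le_p // lt_def xij_neq0 x_ge0 ?x_le1.
apply: le_trans (ler_sum _ (fun j _ => le_trans (lower_exponent j)
  (amgm_weighted q_gt0 (fun i Pi => x_ge0 i j Pi) q_sum1))) _.
rewrite exchange_big /= -[leRHS]q_sum1.
by under eq_bigr => i Pi do rewrite -mulr_sumr x_sum1 // mulr1.
Qed.

Lemma holder (a : I -> J -> R) : (forall i j, P i -> 0 <= a i j) ->
  \sum_j \prod_(i | P i) a i j `^ p i <= \prod_(i | P i) (\sum_j a i j) `^ p i.
Proof.
move=> a_ge0; pose S i := \sum_j a i j.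
have S_ge0 i : P i -> 0 <= S i by move=> Pi; apply: sumr_ge0 => j _; apply: a_ge0.
have rhs_ge0 : 0 <= \prod_(i | P i) S i `^ p i by apply: prodr_ge0 => i _; apply: powR_ge0.
have [i /andP[Pi /eqP Si0]|S_neq0] := pickP [pred i | P i && (S i == 0)].
  rewrite big1 // => j _; rewrite (bigD1 i Pi) /=.
  have /eqP := Si0; rewrite psumr_eq0 => [/allP/(_ j (mem_index_enum j))/eqP->|k _].
    by rewrite powR0 ?mul0r // gt_eqF ?p_gt0.
  exact: a_ge0.
have S_gt0 i : P i -> 0 < S i.
  by move=> Pi; rewrite lt_def S_ge0 // andbT; have /= := S_neq0 i; rewrite Pi /= => ->.
pose x i j := a i j / S i.
have factor_S j : \prod_(i | P i) a i j `^ p i =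
    \prod_(i | P i) S i `^ p i * \prod_(i | P i) x i j `^ p i.
  rewrite -big_split; apply: eq_bigr => i Pi /=.
  have Sx : S i * x i j = a i j by rewrite /x mulrC divfK ?gt_eqF ?S_gt0.
  by rewrite -powRM ?Sx // ?S_ge0 // /x divr_ge0 ?a_ge0 ?S_ge0.
rewrite (eq_bigr _ (fun j _ => factor_S j)) -mulr_sumr ler_piMr //.
rewrite holder_normalized // => [i j Pi|i Pi].
  by rewrite divr_ge0 ?a_ge0 ?S_ge0.
by rewrite -mulr_suml divff ?gt_eqF ?S_gt0.
Qed.
End Holder.

Lemma setU1_ind (T : finType) (P : {set T} -> Prop) :
  P set0 -> (forall x (A : {set T}), x \notin A -> P A -> P (x |: A)) -> forall A, P A.
Proof.
move=> P0 PU1 A; move cardA: #|A| => k; elim: k A cardA => [|k IH] A cardA.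
  by move/eqP: cardA; rewrite cards_eq0 => /eqP ->.
have [x Ax] : exists x, x \in A by apply/set0Pn; rewrite -card_gt0 cardA.
rewrite -(setD1K Ax); apply: PU1; first by rewrite setD11.
by apply: IH; move: cardA; rewrite (cardsD1 x A) Ax => -[].
Qed.

Section Finner.
Variable R : realType.
Variables m n : nat.
Local Notation vmap := {ffun 'I_m -> 'I_n}.
Implicit Types (D E e : {set 'I_m}) (x y z : vmap) (F : vmap -> R).

Definition agree_off D z x := [forall u, (u \notin D) ==> (x u == z u)].

Definition sum_out D z F := \sum_(x | agree_off D z x) F x.

Definition local e F := forall x y, {in e, x =1 y} -> F x = F y.

Definition fupd z v c : vmap := [ffun u => if u == v then c else z u].

Lemma fupdE z v c u : fupd z v c u = if u == v then c else z u.
Proof. by rewrite ffunE. Qed.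

Lemma sum_out0 z F : sum_out set0 z F = F z.
Proof.
rewrite /sum_out (big_pred1 z) // => x /=; apply/forallP/eqP => [agree|->] //.
  by apply/ffunP => u; apply/eqP; have := agree u; rewrite in_set0.
by move=> u; rewrite eqxx implybT.
Qed.

Lemma agree_off_fupd D z v c x : v \notin D ->
  agree_off D (fupd z v c) x = agree_off (v |: D) z x && (x v == c).
Proof.
move=> vD; apply/forallP/andP => [agree|[/forallP agree /eqP xv] u].
  split; last by have := agree v; rewrite vD fupdE eqxx.
  apply/forallP => u; apply/implyP; rewrite in_setU1 negb_or => /andP[uv uD].
  by have := agree u; rewrite uD fupdE (negbTE uv).
apply/implyP => uD; rewrite fupdE; case: (eqVneq u v) => [->|uv]; first by rewrite xv.
by have := agree u; rewrite in_setU1 (negbTE uv) (negbTE uD).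
Qed.

Lemma sum_outU1 D z v F : v \notin D ->
  sum_out (v |: D) z F = \sum_c sum_out D (fupd z v c) F.
Proof.
move=> vD; rewrite /sum_out; under [RHS]eq_bigr do rewrite big_mkcond.
rewrite exchange_big /= big_mkcond; apply: eq_bigr => x _.
under eq_bigr do rewrite agree_off_fupd //.
case: (agree_off (v |: D) z x); last by rewrite big1.
by rewrite -big_mkcond (big_pred1 (x v)) // => c; rewrite eq_sym.
Qed.

Lemma eq_sum_out_local E e z z' F : E \subset e -> {in e, z =1 z'} -> local e F ->
  sum_out E z F = sum_out E z' F.
Proof.
elim/setU1_ind: E z z' => [|v E vE IH] z z' Ee zz' Fe; first by rewrite !sum_out0; apply: Fe.
rewrite !sum_outU1 //; apply: eq_bigr => c _.
apply: IH (subset_trans (subsetUr _ _) Ee) _ Fe => u ue.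
by rewrite !fupdE; case: ifP => // _; apply: zz'.
Qed.

Variables (H : {set {set 'I_m}}) (phi : {set 'I_m} -> R) (g : {set 'I_m} -> vmap -> R).
Hypotheses (phi_gt0 : forall e, e \in H -> 0 < phi e)
  (g_ge0 : forall e x, e \in H -> 0 <= g e x)
  (g_local : forall e, e \in H -> local e (g e)).

Theorem finner D z : (forall v, v \in D -> 1 <= \sum_(e in H | v \in e) phi e) ->
  sum_out D z (fun x => \prod_(e in H) g e x `^ phi e) <=
  \prod_(e in H) sum_out (D :&: e) z (g e) `^ phi e.
Proof.
elim/setU1_ind: D z => [|v D vD IH] z cover_D.
  by rewrite sum_out0; under [X in _ <= X]eq_bigr do rewrite set0I sum_out0.
have cover_v := cover_D v (setU11 v D).
have {}IH c := IH (fupd z v c) (fun u uD => cover_D u (setU1r v uD)).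
pose A e c := sum_out (D :&: e) (fupd z v c) (g e).
have away_from_v e c : e \in H -> v \notin e ->
    A e c = sum_out ((v |: D) :&: e) z (g e).
  move=> eH ve; have -> : (v |: D) :&: e = D :&: e.
    apply/setP => u; rewrite !inE; case: (eqVneq u v) => [->|] //=.
    by rewrite (negbTE ve) !andbF.
  apply: eq_sum_out_local (subsetIr D e) _ (g_local eH) => u ue.
  by rewrite fupdE; case: eqVneq ue => // ->; rewrite (negbTE ve).
have at_v e : e \in H -> v \in e -> \sum_c A e c = sum_out ((v |: D) :&: e) z (g e).
  move=> eH ve; have -> : (v |: D) :&: e = v |: (D :&: e).
    by rewrite setIUl (setIidPl _) ?sub1set.
  by rewrite sum_outU1 // inE negb_and vD.
rewrite sum_outU1 //; apply: le_trans (ler_sum _ (fun c _ => IH c)) _.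
rewrite [X in _ <= X](bigID (fun e : {set 'I_m} => v \in e)) /=.
have split_at_v c : \prod_(e in H) A e c `^ phi e =
    \prod_(e in H | v \in e) A e c `^ phi e *
    \prod_(e in H | v \notin e) sum_out ((v |: D) :&: e) z (g e) `^ phi e.
  rewrite (bigID (fun e : {set 'I_m} => v \in e)); congr (_ * _).
  by apply: eq_bigr => e /andP[eH ve]; congr (_ `^ _); apply: away_from_v.
(* The edges missing v give a factor independent of c; for the edges through
   v, whose weights sum to at least 1, use Hoelder's inequality in c. *)
rewrite (eq_bigr _ (fun c _ => split_at_v c)) -mulr_suml.
apply: ler_pM.
- by apply: sumr_ge0 => c _; apply: prodr_ge0 => e _; apply: powR_ge0.
- by apply: prodr_ge0 => e _; apply: powR_ge0.
- under [X in _ <= X]eq_bigr => e /andP[eH ve] do rewrite -at_v //.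
  apply: holder => [e /andP[eH _]||e c /andP[eH _]].
  + exact: phi_gt0.
  + exact: cover_v.
  + by apply: sumr_ge0 => x _; apply: g_ge0.
exact: lexx.
Qed.
End Finner.

Lemma natr_card_setI (R : pzSemiRingType) (T : finType) (P Q : pred T) :
  (#|[set x | P x && Q x]|%:R : R) = \sum_(x | P x) (Q x)%:R.
Proof.
rewrite -sum1dep_card natr_sum big_mkcondr /=.
by apply: eq_bigr => x _; case: (Q x).
Qed.

Lemma prod_powR (R : realType) (I : finType) (P : pred I) (a : R) (p : I -> R) : 0 < a ->
  \prod_(i | P i) a `^ p i = a `^ (\sum_(i | P i) p i).
Proof. by move=> a_gt0; rewrite /powR gt_eqF // mulr_suml expR_sum. Qed.

Section Copies.
Variables (m n : nat) (H : {set {set 'I_m}}) (G : {set {set 'I_n}}).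
Local Notation vmap := {ffun 'I_m -> 'I_n}.
Implicit Types (x y z : vmap) (e E : {set 'I_m}) (F : {set {set 'I_n}}).

Lemma card_edge_maps E e z : E \subset e ->
  (#|[set x | agree_off E z x && (x @: e \in G)]| <= #|G| * m.+1 ^ m)%N.
Proof.
(* On E, x is recovered from the edge x @: e and the positions of its values
   in the enumeration of that edge. *)
move=> Ee; pose code x := (x @: e,
  [ffun u => inord (index (x u) (enum (x @: e))) : 'I_m.+1]).
have index_small x u : u \in e -> (index (x u) (enum (x @: e)) < m.+1)%N.
  move=> ue; have xu_in : x u \in enum (x @: e) by rewrite mem_enum; apply: imset_f.
  have size_le : (size (enum (x @: e)) <= m)%N.
    by rewrite -cardE (leq_trans (leq_imset_card _ _)) // (leq_trans (max_card _)) ?card_ord.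
  by rewrite ltnS (leq_trans _ size_le) // ltnW // index_mem.
have code_inj : {in [set x | agree_off E z x && (x @: e \in G)] &, injective code}.
  move=> x y; rewrite !inE => /andP[/forallP agx _] /andP[/forallP agy _] [exy].
  move=> /ffunP codexy; apply/ffunP => u; have [uE|uE] := boolP (u \in E); last first.
    by have := agx u; have := agy u; rewrite uE => /eqP-> /eqP->.
  have ue := subsetP Ee u uE; have := congr1 val (codexy u); rewrite !ffunE /=.
  rewrite !inordK ?index_small // -exy => eq_index.
  have xu_in : x u \in enum (x @: e) by rewrite mem_enum; apply: imset_f.
  have yu_in : y u \in enum (x @: e) by rewrite exy mem_enum; apply: imset_f.
  by rewrite -(nth_index (x u) xu_in) eq_index nth_index.
apply: (@leq_trans #|setX G [set: {ffun 'I_m -> 'I_m.+1}]|).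
  rewrite -(card_in_imset code_inj); apply/subset_leq_card/subsetP => c /imsetP[x].
  by rewrite !inE => /andP[_ xeG] ->; rewrite andbT.
by rewrite cardsX cardsT card_ffun !card_ord.
Qed.

Definition embedding (F : {set {set 'I_n}}) x :=
  [forall u in cover H, forall u' in cover H, (x u == x u') ==> (u == u')] &&
  [forall e in H, (x @: e) \in F].

(* Values off the vertex set of H are frozen to z, so only the images of the
   vertices of H are counted. *)
Definition homs z := [set x | agree_off (cover H) z x && [forall e in H, x @: e \in G]].

Definition copies z : {set {set {set 'I_n}}} :=
  [set [set x @: e | e : {set 'I_m} in H]
    | x : vmap in [set x : vmap | agree_off (cover H) z x && embedding G x]].

Lemma embedding_inj F x : embedding F x -> {in cover H &, injective x}.
Proof.
move=> /andP[/forall_inP inj _] u u' uH u'H xuu'.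
by have /forall_inP/(_ u' u'H) := inj u uH; rewrite xuu' eqxx => /eqP.
Qed.

Lemma edge_from_image x e : {in cover H &, injective x} -> e \in H ->
  e = [set u in cover H | x u \in x @: e].
Proof.
move=> x_inj eH; have eH' : e \subset cover H by apply: (bigcup_sup e eH).
apply/setP => u; rewrite inE; apply/idP/andP => [ue|[uH /imsetP[u' u'e xuu']]].
  by split; [apply: (subsetP eH') | apply: imset_f].
by have -> : u = u' by apply: x_inj => //; apply: (subsetP eH').
Qed.

Lemma card_copies_le_homs z : (#|copies z| <= #|homs z|)%N.
Proof.
apply: leq_trans (leq_imset_card _ _) (subset_leq_card _).
apply/subsetP => x; rewrite !inE => /andP[-> /andP[_ /forall_inP edges]].
by apply/forall_inP.
Qed.

Lemma copies_sub z S : S \in copies z -> S \subset G /\ #|S| = #|H|.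
Proof.
case/imsetP=> x; rewrite inE => /andP[_ emb] ->; split.
  by apply/subsetP => _ /imsetP[e eH ->]; case/andP: emb => _ /forall_inP->.
apply: card_in_imset => e e' eH e'H eqx.
have x_inj := embedding_inj emb.
by rewrite [LHS](edge_from_image x_inj eH) [RHS](edge_from_image x_inj e'H) eqx.
Qed.

Lemma has_copy_copies z F : F \subset G -> has_copy H F ->
  exists2 S, S \in copies z & S \subset F.
Proof.
move=> FG /existsP[f /andP[/forall_inP f_inj /forall_inP f_edges]].
pose x : vmap := [ffun u => if u \in cover H then f u else z u].
have xf : {in cover H, x =1 f} by move=> u uH; rewrite ffunE uH.
have xe e : e \in H -> x @: e = f @: e.
  by move=> eH; apply: eq_in_imset => u ue; rewrite xf // (subsetP (bigcup_sup e eH)).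
exists [set x @: e | e : {set 'I_m} in H]; last first.
  by apply/subsetP => _ /imsetP[e eH ->]; rewrite xe ?f_edges.
apply: imset_f; rewrite inE; apply/and3P; split.
- by apply/forallP => u; apply/implyP => uH; rewrite ffunE (negbTE uH).
- apply/forall_inP => u uH; apply/forall_inP => u' u'H; rewrite !xf //.
  by have /forall_inP/(_ u' u'H) := f_inj u uH.
- by apply/forall_inP => e eH; rewrite xe // (subsetP FG) ?f_edges.
Qed.

Variable R : realType.

Lemma card_homs_le_support z (K : {set {set 'I_m}}) (phi : {set 'I_m} -> R) :
  (0 < #|G|)%N -> K \subset H -> (forall e, e \in K -> 0 < phi e) ->
  (forall v, v \in cover H -> 1 <= \sum_(e in K | v \in e) phi e) ->
  #|homs z|%:R <= (#|G| * m.+1 ^ m)%:R `^ (\sum_(e in K) phi e).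
Proof.
move=> G_gt0 KH phi_gt0 phi_cover; pose g e x : R := (x @: e \in G)%:R.
have g_local e : local e (g e) by move=> x y xy; rewrite /g (eq_in_imset xy).
apply: (@le_trans _ _ (sum_out (cover H) z (fun x => \prod_(e in K) g e x `^ phi e))).
  rewrite natr_card_setI; apply: ler_sum => x _.
  case: forall_inP => [edges|_]; last by apply: prodr_ge0 => e _; apply: powR_ge0.
  by rewrite big1 // => e eK; rewrite /g edges ?(subsetP KH) // powR1.
apply: le_trans (finner phi_gt0 (fun e x _ => ler0n R _) (fun e _ => g_local e) z phi_cover) _.
rewrite -prod_powR ?ltr0n ?muln_gt0 ?G_gt0 ?expn_gt0 //.
apply: ler_prod => e eK; rewrite powR_ge0 /=.
apply: ge0_ler_powR; first exact/ltW/phi_gt0.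
- by rewrite nnegrE; apply: sumr_ge0 => x _; apply: ler0n.
- by rewrite nnegrE ler0n.
by rewrite /sum_out -natr_card_setI ler_nat card_edge_maps ?subsetIr.
Qed.

End Copies.

Lemma ler_powR_inf (R : realType) (E : set R) (a y : R) : 1 <= a -> (E !=set0)%classic ->
  (forall w, E w -> y <= a `^ w) -> y <= a `^ inf E.
Proof.
move=> a_ge1 [w0 Ew0] y_le; have [y_le0|y_gt0] := leP y 0.
  exact: le_trans y_le0 (powR_ge0 _ _).
have [a1|a_neq1] := eqVneq a 1; first by have := y_le w0 Ew0; rewrite a1 !powR1.
have ln_a_gt0 : 0 < ln a by rewrite ln_gt0 // lt_neqAle eq_sym a_neq1.
have a_gt0 : 0 < a by apply: lt_le_trans a_ge1.
have lb : lbound E (ln y / ln a).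
  move=> w Ew; rewrite ler_pdivrMr // -ln_powR ler_ln ?posrE ?powR_gt0 //.
  exact: y_le.
have -> : y = a `^ (ln y / ln a) by rewrite /powR gt_eqF // divfK ?gt_eqF // lnK.
by apply: ler_powR => //; apply: lb_le_inf; first by exists w0.
Qed.

Section RhoStar.
Variables (R : realType) (m : nat) (H : {set {set 'I_m}}).

Lemma frac_cover1 : frac_cover H (fun=> 1 : R).
Proof.
split=> [e _|v /bigcupP[e eH ve]]; first by rewrite ler01 lexx.
by rewrite (bigD1 e) ?eH ?ve //= lerDl sumr_ge0 // => *; apply: ler01.
Qed.

Lemma le_rho_star (b : R) :
  (forall phi, frac_cover H phi -> b <= \sum_(e in H) phi e) -> b <= rho_star R H.
Proof.
move=> b_le; apply: lb_le_inf => [|w [phi [cover_phi ->]]]; last exact: b_le.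
by exists (\sum_(e in H) 1); exists (fun=> 1); split; first exact: frac_cover1.
Qed.

Lemma rho_star_ge0 : 0 <= rho_star R H.
Proof.
apply: le_rho_star => phi [phi01 _]; apply: sumr_ge0 => e eH.
by case/andP: (phi01 e eH).
Qed.

Lemma rho_star_ge1 : hypergraph H -> (0 < #|H|)%N -> 1 <= rho_star R H.
Proof.
move=> H_nonempty_edges /card_gt0P[e eH]; have /set0Pn[v ve] : e != set0.
  by apply: contraNneq H_nonempty_edges => <-.
apply: le_rho_star => phi [phi01 phi_cover].
apply: le_trans (phi_cover v (subsetP (bigcup_sup e eH) v ve)) _.
rewrite [X in _ <= X](bigID (fun f : {set 'I_m} => v \in f)) /= lerDl.
by apply: sumr_ge0 => f /andP[fH _]; case/andP: (phi01 f fH).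
Qed.

Lemma card_homs_le_rho n (G : {set {set 'I_n}}) z : (0 < #|G|)%N ->
  #|homs H G z|%:R <= (#|G| * m.+1 ^ m)%:R `^ rho_star R H.
Proof.
move=> G_gt0; apply: ler_powR_inf; first by rewrite ler1n muln_gt0 G_gt0 expn_gt0.
  by exists (\sum_(e in H) 1); exists (fun=> 1); split; first exact: frac_cover1.
move=> _ [phi [[phi01 phi_cover] ->]].
(* Finner's inequality needs positive weights: restrict phi to its support *)
pose K := [set e in H | 0 < phi e].
have phi_support P : \sum_(e in H | P e) phi e = \sum_(e in K | P e) phi e.
  rewrite big_mkcond [RHS]big_mkcond; apply: eq_bigr => e _; rewrite inE.
  case: (boolP (e \in H)) => //= eH; case: ltP => //=; case/andP: (phi01 e eH) => phi_ge0 _.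
  by case: ifP => // _ phi_le0; apply/eqP; rewrite eq_le phi_le0 phi_ge0.
rewrite -big_condT (phi_support xpredT) big_condT; apply: card_homs_le_support => //.
- by apply/subsetP => e; rewrite inE => /andP[].
- by move=> e; rewrite inE => /andP[].
by move=> v vH; rewrite -phi_support; apply: phi_cover.
Qed.
End RhoStar.

Section Growth.
Variables (R : realType) (s l k : nat) (r M : R).
Hypotheses (s_ge2 : (2 <= s)%N) (r_ge1 : 1 <= r) (r_lt_s : r < s%:R) (M_ge1 : 1 <= M)
  (l_gt0 : (0 < l)%N).
Hypothesis deletion : forall t : nat, (t <= l)%N ->
  t%:R <= k%:R - 1 + M * l%:R `^ r * (t%:R / l%:R) ^+ s.

Let L : R := l%:R.
(* x is chosen so that the deletion loss M L^r (t/L)^s is at most t/2 for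
   every t <= x. *)
Let x := (L `^ (s%:R - r) / (2 * M)) `^ (s.-1%:R)^-1.

Let L_ge1 : 1 <= L. Proof. by rewrite ler1n. Qed.
Let L_gt0 : 0 < L. Proof. by rewrite ltr0n. Qed.
Let M_gt0 : 0 < M. Proof. by apply: lt_le_trans M_ge1. Qed.
Let x_ge0 : 0 <= x. Proof. exact: powR_ge0. Qed.
Let s1E : s.-1%:R = s%:R - 1 :> R. Proof. by rewrite -subn1 natrB //; lia. Qed.

Let x_pow : x ^+ s.-1 = L `^ (s%:R - r) / (2 * M).
Proof.
rewrite -powR_mulrn // -powRrM mulVf ?powRr1 ?divr_ge0 ?powR_ge0 ?mulr_ge0 ?ltW //.
by rewrite pnatr_eq0 -lt0n; lia.
Qed.

Let x_le_l : x <= L.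
Proof.
have s1_gt0 : (0 < s.-1)%N by lia.
rewrite -(ler_pXn2r s1_gt0) ?nnegrE ?x_ge0 ?(ltW L_gt0) //.
rewrite x_pow -powR_mulrn ?(ltW L_gt0) //.
have sr_le : s%:R - r <= s.-1%:R by rewrite s1E lerD2l lerN2.
apply: le_trans (ler_powR L_ge1 sr_le).
by rewrite ler_pdivrMr ?mulr_gt0 // ler_peMr ?powR_ge0 //; have := M_ge1; lra.
Qed.

Let x_lt_2k : x < 2 * k%:R.
Proof.
have [t_le_x x_lt_t1] := andP (truncn_itv x_ge0); set t := Num.truncn x in t_le_x x_lt_t1.
have t_le_l : (t <= l)%N by rewrite -(ler_nat R); apply: le_trans t_le_x x_le_l.
have t_pow : (t%:R : R) ^+ s.-1 <= L `^ (s%:R - r) / (2 * M).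
  by rewrite -x_pow lerXn2r ?nnegrE ?ler0n.
have LrLsr : L `^ r * L `^ (s%:R - r) = L ^+ s.
  rewrite -powRD; last by rewrite (gt_eqF L_gt0) implybT.
  by rewrite subrKC powR_mulrn // ltW.
have half : M * L `^ r * (t%:R / L) ^+ s <= t%:R / 2.
  have tS : (t%:R : R) ^+ s = t%:R * t%:R ^+ s.-1 by rewrite -exprS prednK //; lia.
  rewrite expr_div_n tS.
  have -> : t%:R / 2 = M * L `^ r * (t%:R * (L `^ (s%:R - r) / (2 * M)) / L ^+ s).
    by rewrite -LrLsr; field; rewrite !gt_eqF ?powR_gt0.
  apply: ler_wpM2l; first by rewrite mulr_ge0 ?powR_ge0 // ltW.
  apply: ler_wpM2r; first by rewrite invr_ge0 exprn_ge0 // ltW.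
  by apply: ler_wpM2l; rewrite ?ler0n.
have := deletion t_le_l; have := half; move: x_lt_t1; rewrite -natr1; lra.
Qed.

Lemma growth_bound :
  L <= (M * 2 ^+ s) `^ (s%:R - r)^-1 * k%:R `^ ((s%:R - 1) / (s%:R - r)).
Proof.
have sr_gt0 : 0 < s%:R - r by rewrite subr_gt0.
have key : L `^ (s%:R - r) < M * 2 ^+ s * k%:R ^+ s.-1.
  have -> : L `^ (s%:R - r) = 2 * M * x ^+ s.-1.
    by rewrite x_pow mulrC divfK // mulf_neq0 ?gt_eqF.
  have -> : M * 2 ^+ s * k%:R ^+ s.-1 = 2 * M * (2 * k%:R) ^+ s.-1.
    by rewrite exprMn -[in LHS](prednK (_ : 0 < s)%N) /= ?exprS; [ring | lia].
  by rewrite ltr_pM2l ?mulr_gt0 // ltrXn2r ?x_lt_2k // -lt0n; lia.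
have -> : (s%:R - 1) / (s%:R - r) = s.-1%:R * (s%:R - r)^-1 by rewrite s1E.
have M2s_ge0 : 0 <= M * 2 ^+ s by rewrite mulr_ge0 ?exprn_ge0 // ltW.
rewrite powRrM powR_mulrn ?ler0n // -powRM ?exprn_ge0 ?ler0n //.
have L_root : L = (L `^ (s%:R - r)) `^ (s%:R - r)^-1.
  by rewrite -powRrM mulfV ?gt_eqF // powRr1 // ltW.
rewrite [X in X <= _]L_root; apply: ge0_ler_powR; rewrite ?nnegrE ?invr_ge0 ?powR_ge0 //.
- exact: ltW.
- by rewrite mulr_ge0 ?exprn_ge0 ?ler0n.
- exact: ltW.
Qed.
End Growth.

Lemma ex_deletion_bound (R : realType) m n (H : {set {set 'I_m}}) (G : {set {set 'I_n}}) z t :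
  (0 < #|H|)%N -> (0 < #|G|)%N -> (t <= #|G|)%N ->
  t%:R <= (ex G H)%:R + #|copies H G z|%:R * (t%:R / #|G|%:R) ^+ #|H| :> R.
Proof.
move=> H_gt0 G_gt0 tG.
have [F [FG F_free few]] := exists_free_subset (copies_sub (z := z)) H_gt0 tG.
have F_le_ex : (#|F| <= ex G H)%N.
  rewrite /ex; apply: leq_bigmax_cond; rewrite FG /=.
  by apply/negP => /(has_copy_copies z FG)[S /F_free/negP].
have : (t - ex G H)%:R <= #|copies H G z|%:R * (t%:R / #|G|%:R) ^+ #|H| :> R.
  rewrite expr_div_n mulrA ler_pdivlMr ?exprn_gt0 ?ltr0n // -!natrX -!natrM ler_nat.
  by apply: leq_trans few; rewrite leq_mul2r leq_sub2l ?orbT.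
rewrite -(lerD2l (ex G H)%:R); apply: le_trans; rewrite -natrD ler_nat; lia.
Qed.

Unset Implicit Arguments.
Theorem proposition2p8 (R : realType) (m : nat) (H : {set {set 'I_m}}) :
  hypergraph H ->
  rho_star R H < (#|H|)%:R ->
  exists c : R, forall k : nat, (0 < k)%N ->
    forall (n : nat) (G : {set {set 'I_n}}), hypergraph G ->
      (ex G H < k)%N ->
      (#|G|)%:R <= c * powR (k%:R)
        (((#|H|)%:R - 1) / ((#|H|)%:R - rho_star R H)).
Proof.
move=> H_edges rho_lt.
have H_gt0 : (0 < #|H|)%N by rewrite -(ltr0n R); apply: le_lt_trans (rho_star_ge0 R H) rho_lt.
have rho_ge1 := rho_star_ge1 R H_edges H_gt0.
have H_ge2 : (2 <= #|H|)%N by rewrite -(ltr_nat R); apply: le_lt_trans rho_ge1 rho_lt.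
pose M := ((m.+1 ^ m)%N%:R : R) `^ rho_star R H.
have M_ge1 : 1 <= M.
  by rewrite -[leLHS](powRr0 ((m.+1 ^ m)%N%:R)) ler_powR ?ler1n ?expn_gt0 // (le_trans ler01).
exists ((M * 2 ^+ #|H|) `^ (#|H|%:R - rho_star R H)^-1) => k _ n G G_edges exGH.
have [->|G_gt0] := posnP #|G|; first by rewrite mulr_ge0 ?powR_ge0.
have /card_gt0P[g gG] := G_gt0.
have /set0Pn[c0 _] : g != set0 by apply: contraNneq G_edges => <-.
pose z : {ffun 'I_m -> 'I_n} := [ffun=> c0].
have copies_le : #|copies H G z|%:R <= M * #|G|%:R `^ rho_star R H.
  rewrite mulrC -powRM ?ler0n // -natrM.
  by apply: le_trans (card_homs_le_rho R H z G_gt0); rewrite ler_nat card_copies_le_homs.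
apply: growth_bound => // t tG.
apply: le_trans (ex_deletion_bound R z H_gt0 G_gt0 tG) _.
apply: lerD; first by rewrite lerBrDr natr1 ler_nat.
by apply: ler_wpM2r copies_le; rewrite exprn_ge0 // divr_ge0.
Qed.
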